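(* Let $G$ and $H$ be finite simple graphs without isolated vertices. Then: (i) there are no such graphs $G,H$ with $\gamma_{tR}(G\times H)\in\{1,2,3,5\}$; (ii) $\gamma_{tR}(G\times H)=4$ if and only if $G$ and $H$ are both isomorphic to $K_2$; (iii) $\gamma_{tR}(G\times H)=6$ if and only if ($G$ and $H$ each have at least two universal vertices and at least one of them has order at least three), or (one factor is $K_2$ and the other has order at least three and contains a universal vertex), or ($G$ and $H$ are both triangle centered); (iv) $\gamma_{tR}(G\times H)=7$ if and only if both $G$ and $H$ have a universal vertex, one of $G$ and $H$ has exactly one universal vertex and the other one is different from $K_2$, and at most one of $G$ and $H$ is triangle centered; (v) if at most one of $G$ and $H$ has a universal vertex, $\gamma_t(G)=\gamma_t(H)=2$, and $G$ and $H$ are not both triangle centered, then $\gamma_{tR}(G\times H)=8$.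
   Context: A total Roman dominating function on $G$ is a map $f:V(G)\to\{0,1,2\}$ such that every vertex with label 0 has a neighbor with label 2 and the subgraph induced by vertices with positive labels has no isolated vertices; $\gamma_{tR}(G)$ is the minimum of $\sum_v f(v)$ over such $f$. $\gamma_t(G)$ is the minimum size of a set $D$ such that every vertex of $G$ has a neighbor in $D$. A universal vertex of $G$ is a vertex adjacent to all other vertices. $G$ is triangle centered if it contains a triangle $xyz$ such that every vertex of $G$ is adjacent to at least two vertices of $\{x,y,z\}$. The direct product $G\times H$ has vertex set $V(G)\times V(H)$, with $(g,h)(g',h')$ an edge iff $gg'\in E(G)$ and $hh'\in E(H)$. *)

From mathcomp Require Import all_boot all_order.
Set Implicit Arguments. Unset Strict Implicit. Unset Printing Implicit Defensive.

Section Graphs.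
Variable T : finType.
Variable e : rel T.

Definition simple_graph : Prop := irreflexive e /\ symmetric e.

Definition no_isolated : Prop := forall x : T, exists y : T, e x y.

Definition trdf (f : {ffun T -> 'I_3}) : bool :=
  [forall v, (val (f v) == 0) ==> [exists u, e v u && (val (f u) == 2)]] &&
  [forall v, (0 < val (f v)) ==> [exists u, e v u && (0 < val (f u))]].

Definition trdf_weight (f : {ffun T -> 'I_3}) : nat := \sum_(v : T) val (f v).

(* minimum weight of a TRDF; the default value #|T|.*2 is the weight of the
   constant-2 function, which is a TRDF whenever there are no isolated vertices *)
Definition gamma_tR : nat :=
  \big[minn/#|T|.*2]_(f : {ffun T -> 'I_3} | trdf f) trdf_weight f.

Definition total_dom (D : {set T}) : bool :=
  [forall v, [exists u in D, e v u]].

Definition gamma_t : nat :=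
  \big[minn/#|T|]_(D : {set T} | total_dom D) #|D|.

Definition universal (x : T) : bool := [forall y, (y != x) ==> e x y].

Definition universals : {set T} := [set x | universal x].

Definition has_universal : Prop := exists x, universal x.

Definition isK2 : Prop := #|T| = 2 /\ forall x y : T, x != y -> e x y.

Definition triangle_centered : Prop :=
  exists x y z : T, [/\ e x y, e y z, e x z &
    forall v : T, 2 <= (e v x : nat) + (e v y : nat) + (e v z : nat)].
End Graphs.

Definition direct_prod (T1 T2 : finType) (e1 : rel T1) (e2 : rel T2)
  : rel (T1 * T2) := fun u v => e1 u.1 v.1 && e2 u.2 v.2.

(* Write a TRDF f of G × H through its set P of positive vertices and its set V of
   2-labelled vertices, so that its weight is |P| + |V| with V ⊆ P.  A vertex (x, y)
   outside P needs some (a, b) ∈ V with x ~ a and y ~ b, hence every vertex that V does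
   not dominate is positive: whole rows, columns or crosses of the grid V(G) × V(H) are
   forced into P, and P is large unless the factors are small or have universal vertices.
   A case analysis on the at most three 2-labelled vertices of a TRDF of weight at most 7
   (in one row, in one column, or in general position; columns reduce to rows by swapping
   the factors) gives the lower bounds.  The upper bounds are explicit labellings built
   from universal vertices, central triangles or total dominating pairs. *)

From mathcomp Require Import all_boot all_order zify.
Set Implicit Arguments. Unset Strict Implicit. Unset Printing Implicit Defensive.

Section CardSeq.
Variable T : finType.
Implicit Types (A : {set T}) (s : seq T).

Lemma uniq_size_le_card A s : uniq s -> {subset s <= A} -> size s <= #|A|.
Proof. by move=> us sA; rewrite cardE; apply: uniq_leq_size => // x /sA; rewrite mem_enum. Qed.

Lemma uniq_size_le_cardT s : uniq s -> size s <= #|T|.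
Proof. by move/card_uniqP <-; apply: max_card. Qed.

Lemma sub_uniq_of_card_le A s :
  uniq s -> {subset s <= A} -> #|A| <= size s -> {subset A <= s}.
Proof.
move=> us sA; rewrite cardE => le x; rewrite -mem_enum.
by have [_ <-] := uniq_min_size us (fun y ys => etrans (mem_enum _ _) (sA y ys)) le.
Qed.

Lemma sub_cons_of_card_le A s (x0 : T) : uniq s -> {subset s <= A} ->
  #|A| <= (size s).+1 -> exists z, {subset A <= z :: s}.
Proof.
move=> us sA cA; have [AsubS|/subsetPn [z zA zs]] := boolP (A \subset s).
  by exists x0 => x /(subsetP AsubS) xs; rewrite inE xs orbT.
exists z; apply: sub_uniq_of_card_le => //=; first by rewrite zs.
by move=> x; rewrite inE => /predU1P [->|/sA].
Qed.

Lemma set3_ext_of_card3 A p q : #|A| = 3 -> p \in A -> q \in A -> p != q ->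
  exists r, [/\ r != p, r != q & A = [set p; q; r]].
Proof.
move=> cA pA qA pq; have /cards1P [r Er] : #|A :\ p :\ q| == 1.
  move: cA; rewrite (cardsD1 p) pA (cardsD1 q (A :\ p)) !inE eq_sym pq qA /= !add1n.
  by move=> -[->].
have : r \in A :\ p :\ q by rewrite Er set11.
rewrite !inE => /and3P [rq rp _]; exists r; split=> //.
by rewrite -Er -setUA !setD1K // !inE eq_sym pq.
Qed.

Lemma set3_of_card3 A : #|A| = 3 -> exists p q r, [/\ p != q, r != p, r != q & A = [set p; q; r]].
Proof.
move=> cA; have [p Ap] : exists p, p \in A by apply/card_gt0P; rewrite cA.
have [q] : exists q, q \in A :\ p.
  by apply/card_gt0P; move: cA; rewrite (cardsD1 p) Ap add1n => -[->].
rewrite !inE => /andP [qp Aq]; have [r [rq rp Adef]] := set3_ext_of_card3 cA Aq Ap qp.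
by exists q, p, r.
Qed.

End CardSeq.

Lemma bigmin_le (I : eqType) (r : seq I) (P : pred I) (F : I -> nat) x j :
  j \in r -> P j -> \big[minn/x]_(i <- r | P i) F i <= F j.
Proof.
elim: r => // a r IH; rewrite inE big_cons => /predU1P [<-|jr] Pj; first by rewrite Pj geq_minl.
by case: ifP => _; [apply: leq_trans (geq_minr _ _) _|]; apply: IH.
Qed.

Lemma bigmin_attained (I : Type) (r : seq I) (P : pred I) (F : I -> nat) x :
  \big[minn/x]_(i <- r | P i) F i = x \/ exists2 i, P i & \big[minn/x]_(i <- r | P i) F i = F i.
Proof.
apply: (big_ind (fun m => m = x \/ exists2 i, P i & m = F i)) => [|a b Ha Hb|i Pi].
- by left.
- by rewrite /minn; case: ifP.
- by right; exists i.
Qed.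

Section SimpleGraph.
Variables (T : finType) (e : rel T).
Hypotheses (sg : simple_graph e) (nI : no_isolated e).

Lemma adj_irr x : e x x = false.
Proof. by case: sg => irr _; apply: irr. Qed.

Lemma adj_sym x y : e x y = e y x.
Proof. by case: sg => _ sym; apply: sym. Qed.

Lemma adj_neq x y : e x y -> x != y.
Proof. by apply: contraTneq => ->; rewrite adj_irr. Qed.

Lemma adj_universal u x : universal e u -> x != u -> e x u.
Proof. by move=> /forallP /(_ x) /implyP uP /uP; rewrite adj_sym. Qed.

Lemma card_ge2 (x0 : T) : 2 <= #|T|.
Proof.
have [y x0y] := nI x0.
by apply: (@uniq_size_le_cardT _ [:: x0; y]); rewrite /= inE adj_neq.
Qed.

Lemma isK2_of_card2 : #|T| = 2 -> isK2 e.
Proof.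
move=> c2; split=> // x y xy; have [z xz] := nI x.
have cover : {subset [set: T] <= [:: x; z]}.
  by apply: sub_uniq_of_card_le; rewrite ?cardsT ?c2 //= inE adj_neq.
by move: (cover y (in_setT y)); rewrite !inE eq_sym (negbTE xy) => /eqP ->.
Qed.

Lemma has_universal_of_card_le3 (p : T) : #|T| <= 3 -> has_universal e.
Proof.
move=> c3; have [q pq] := nI p.
have [up|/forallPn [r]] := boolP (universal e p); first by exists p.
rewrite negb_imply => /andP [rp npr].
have rq : r != q by apply: contraNneq npr => ->.
have cover : {subset [set: T] <= [:: p; q; r]}.
  apply: sub_uniq_of_card_le; rewrite ?cardsT //= !inE negb_or adj_neq //=.
  by rewrite eq_sym rp eq_sym rq.
have [s rs] := nI r.
have sq : s = q.
  move: (cover s (in_setT s)); rewrite !inE => /or3P [/eqP sp|/eqP //|/eqP sr].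
  - by move: npr; rewrite adj_sym -sp rs.
  - by move: rs; rewrite sr adj_irr.
exists q; apply/forallP => t; apply/implyP => tq.
move: (cover t (in_setT t)); rewrite !inE => /or3P [/eqP->|/eqP tq'|/eqP->].
- by rewrite adj_sym.
- by rewrite tq' eqxx in tq.
- by rewrite adj_sym -sq.
Qed.

Lemma universals_ge2 u1 u2 : universal e u1 -> universal e u2 -> u1 != u2 -> 2 <= #|universals e|.
Proof.
move=> U1 U2 u12; apply: (@uniq_size_le_card _ _ [:: u1; u2]); first by rewrite /= inE u12.
by move=> x; rewrite !inE => /orP [] /eqP ->.
Qed.

Lemma two_universals : 2 <= #|universals e| ->
  exists u1 u2, [/\ u1 != u2, universal e u1 & universal e u2].
Proof.
by case/card_gt1P => u1 [u2 [U1 U2 u12]]; exists u1, u2; rewrite !inE in U1 U2.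
Qed.

Lemma universals_K2 : isK2 e -> #|universals e| = 2.
Proof.
case=> c2 K; suff -> : universals e = [set: T] by rewrite cardsT.
by apply/setP => x; rewrite !inE; apply/forallP => y; apply/implyP => yx; apply: K; rewrite eq_sym.
Qed.

Lemma triangle_centered_card : triangle_centered e -> 3 <= #|T|.
Proof.
case=> [x [y [z [xy yz xz _]]]].
by apply: (@uniq_size_le_cardT _ [:: x; y; z]); rewrite /= !inE negb_or !adj_neq.
Qed.

Lemma total_dom_setT : total_dom e [set: T].
Proof. by apply/forallP => v; have [u vu] := nI v; apply/existsP; exists u; rewrite in_setT. Qed.

Lemma gamma_t_attained : exists2 D, total_dom e D & gamma_t e = #|D|.
Proof.
rewrite /gamma_t.
have [->|[D tD ->]] := bigmin_attained (index_enum {set T}) (total_dom e) (fun D => #|D|) #|T|.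
- by exists [set: T]; rewrite ?cardsT ?total_dom_setT.
- by exists D.
Qed.

Lemma gamma_t2_dominating_pair : gamma_t e = 2 -> exists p q, forall v, e v p || e v q.
Proof.
have [D tD ->] := gamma_t_attained; move=> /eqP /cards2P [p [q [_ Dpq]]].
exists p, q => v; move/forallP: tD => /(_ v) /existsP [u /andP []].
by rewrite Dpq !inE => /orP [] /eqP -> ->; rewrite ?orbT.
Qed.

Lemma card_gt0_of_gamma_t2 : gamma_t e = 2 -> 0 < #|T|.
Proof. by case/gamma_t2_dominating_pair=> p _; apply/card_gt0P; exists p. Qed.

Definition nonadj a : {set T} := [set x | ~~ e x a].

Lemma nonadj_self a : a \in nonadj a.
Proof. by rewrite inE adj_irr. Qed.

Lemma card_nonadj_gt0 a : 0 < #|nonadj a|.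
Proof. by apply/card_gt0P; exists a; apply: nonadj_self. Qed.

Lemma universal_of_card_nonadj a : #|nonadj a| <= 1 -> universal e a.
Proof.
move=> c1; apply/forallP => x; apply/implyP => xa; apply/negPn/negP => nax.
have : 2 <= #|nonadj a|.
  apply: (@uniq_size_le_card _ _ [:: x; a]); rewrite /= ?inE ?xa // => y.
  by rewrite !inE => /orP [] /eqP ->; rewrite ?adj_irr // adj_sym.
by rewrite leqNgt ltnS c1.
Qed.

End SimpleGraph.

Lemma card_gt0_of_universal (T : finType) (e : rel T) : has_universal e -> 0 < #|T|.
Proof. by case=> u _; apply/card_gt0P; exists u. Qed.

(** * Total Roman domination *)

Lemma sum_mem_card (T : finType) (A : {pred T}) : \sum_(v : T) (v \in A : nat) = #|A|.
Proof. by rewrite -sum1_card [RHS]big_mkcond /=; apply: eq_bigr => v _; case: (v \in A). Qed.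

Section TotalRoman.
Variables (T : finType) (e : rel T).

Lemma gamma_tR_le f : trdf e f -> gamma_tR e <= trdf_weight f.
Proof. by move=> tf; apply: bigmin_le; rewrite ?mem_index_enum. Qed.

Definition labelling (s1 s2 : seq T) : {ffun T -> 'I_3} :=
  [ffun v => inord (if v \in s2 then 2 else if v \in s1 then 1 else 0)].

Lemma labellingE s1 s2 v :
  val (labelling s1 s2 v) = if v \in s2 then 2 else if v \in s1 then 1 else 0.
Proof. by rewrite ffunE -[val _]/(nat_of_ord _) inordK //; case: ifP => _; [|case: ifP]. Qed.

Lemma labelling_weight s1 s2 : trdf_weight (labelling s1 s2) <= size s1 + (size s2).*2.
Proof.
rewrite /trdf_weight (eq_bigr _ (fun v _ => labellingE s1 s2 v)).
apply: (@leq_trans (\sum_v ((v \in s1 : nat) + (v \in s2 : nat).*2))).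
  by apply: leq_sum => v _; case: (v \in s2); case: (v \in s1).
rewrite big_split /= -(big_morph double doubleD double0) !sum_mem_card.
by rewrite leq_add ?leq_double ?card_size.
Qed.

Lemma labelling_trdf (s1 s2 : seq T) :
  (forall v, v \notin s1 -> v \notin s2 -> exists2 u, u \in s2 & e v u) ->
  (forall v, v \in s1 ++ s2 -> exists2 u, u \in s1 ++ s2 & e v u) ->
  trdf e (labelling s1 s2).
Proof.
move=> dom0 domP; apply/andP; split; apply/forallP => v; apply/implyP; rewrite labellingE.
- case: ifP => // v2; case: ifP => // v1 _.
  have [u u2 vu] := dom0 v (negbT v1) (negbT v2).
  by apply/existsP; exists u; rewrite vu labellingE u2.
- move=> pos; have [|u us vu] := domP v.
    by rewrite mem_cat; move: pos; case: (v \in s2); case: (v \in s1); rewrite ?orbT.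
  apply/existsP; exists u; rewrite vu labellingE /=.
  by move: us; rewrite mem_cat; case: (u \in s2); case: (u \in s1).
Qed.

Lemma gamma_tR_le_labelling (s1 s2 : seq T) :
  (forall v, v \notin s1 -> v \notin s2 -> exists2 u, u \in s2 & e v u) ->
  (forall v, v \in s1 ++ s2 -> exists2 u, u \in s1 ++ s2 & e v u) ->
  gamma_tR e <= size s1 + (size s2).*2.
Proof.
move=> dom0 domP; apply: leq_trans (labelling_weight s1 s2).
by apply/gamma_tR_le/labelling_trdf.
Qed.

Lemma gamma_tR_le_double (s : seq T) : (forall v, exists2 u, u \in s & e v u) ->
  gamma_tR e <= (size s).*2.
Proof.
by move=> dom; rewrite -[_.*2]add0n; apply: (@gamma_tR_le_labelling [::]) => v *; apply: dom.
Qed.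

Hypothesis nI : no_isolated e.

Lemma gamma_tR_le_card : gamma_tR e <= #|T|.
Proof.
rewrite cardE -[size _]addn0; apply: (@gamma_tR_le_labelling _ [::]) => v.
- by rewrite mem_enum.
- by have [u vu] := nI v; exists u; rewrite ?cats0 ?mem_enum.
Qed.

Lemma gamma_tR_attained : exists2 f, trdf e f & gamma_tR e = trdf_weight f.
Proof.
have [gdef|[f tf gf]] := bigmin_attained (index_enum {ffun T -> 'I_3}) (trdf e)
  (@trdf_weight T) #|T|.*2; last by exists f.
have t2 : trdf e (labelling [::] (enum T)).
  apply: labelling_trdf => v; first by rewrite mem_enum.
  by have [u vu] := nI v; exists u; rewrite ?mem_enum.
exists (labelling [::] (enum T)) => //; apply/eqP; rewrite eqn_leq gamma_tR_le //.
by rewrite /gamma_tR gdef; apply: leq_trans (labelling_weight _ _) _; rewrite cardE.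
Qed.

Lemma gamma_tR_gt0 (x : T) : 0 < gamma_tR e.
Proof.
have [f tf ->] := gamma_tR_attained.
have weight_ge v : val (f v) <= trdf_weight f by rewrite /trdf_weight (bigD1 v) //= leq_addr.
case fx: (val (f x)) => [|k]; last by apply: leq_trans _ (weight_ge x); rewrite fx.
case/andP: tf => /forallP /(_ x) /implyP; rewrite fx => /(_ isT) /existsP [u /andP [_ /eqP fu]] _.
by apply: leq_trans _ (weight_ge u); rewrite fu.
Qed.

End TotalRoman.

Section Labellings.
Variable T : finType.
Implicit Type f : {ffun T -> 'I_3}.

Definition pos_set f : {set T} := [set v | 0 < val (f v)].
Definition two_set f : {set T} := [set v | val (f v) == 2].

Lemma two_set_sub f v : v \in two_set f -> v \in pos_set f.
Proof. by rewrite !inE => /eqP ->. Qed.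

Lemma trdf_weightE f : trdf_weight f = #|pos_set f| + #|two_set f|.
Proof.
rewrite /trdf_weight -!sum_mem_card -big_split /=; apply: eq_bigr => v _.
by rewrite !inE; case: (f v) => [[|[|[|k]]] ?].
Qed.

Lemma card_two_set_le f : #|two_set f| <= #|pos_set f|.
Proof. by apply/subset_leq_card/subsetP => v; apply: two_set_sub. Qed.

Lemma trdf_weight_ge_double_two f : (#|two_set f|).*2 <= trdf_weight f.
Proof. by rewrite trdf_weightE -addnn leq_add2r card_two_set_le. Qed.

Lemma pos_set_sub_cons f : 0 < #|two_set f| -> #|pos_set f| <= #|two_set f|.+1 ->
  exists z, {subset pos_set f <= z |: two_set f}.
Proof.
move=> /card_gt0P [x0 _] le; rewrite [#|two_set f|]cardE in le.
have [v|z PzV] := sub_cons_of_card_le x0 (enum_uniq (two_set f)) _ le.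
  by rewrite mem_enum; apply: two_set_sub.
by exists z => v /PzV; rewrite in_setU1 inE mem_enum.
Qed.

End Labellings.

(** * Labellings of a direct product *)

Section Swap.
Variables (T1 T2 : finType) (e1 : rel T1) (e2 : rel T2).

Lemma direct_prod_no_isolated : no_isolated e1 -> no_isolated e2 -> no_isolated (direct_prod e1 e2).
Proof.
move=> nG nH [x y]; have [x' xx'] := nG x; have [y' yy'] := nH y.
by exists (x', y'); rewrite /direct_prod /= xx' yy'.
Qed.

Lemma sum_swap (F : T1 * T2 -> nat) : \sum_(v : T2 * T1) F (v.2, v.1) = \sum_(v : T1 * T2) F v.
Proof.
rewrite (reindex (fun v : T1 * T2 => (v.2, v.1))) /=; first by apply: eq_bigr => [[]].
by exists (fun v : T2 * T1 => (v.2, v.1)) => [[]|[]].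
Qed.

Variable f : {ffun T1 * T2 -> 'I_3}.

Definition swap_labelling : {ffun T2 * T1 -> 'I_3} := [ffun v => f (v.2, v.1)].

Lemma swap_labellingE y x : swap_labelling (y, x) = f (x, y).
Proof. by rewrite ffunE. Qed.

Lemma trdf_weight_swap : trdf_weight swap_labelling = trdf_weight f.
Proof.
rewrite /trdf_weight -(sum_swap (fun v => val (f v))).
by apply: eq_bigr => [[y x]] _; rewrite ffunE.
Qed.

Lemma label_set_swap (p : pred 'I_3) :
  [set v | p (swap_labelling v)] = [set (v.2, v.1) | v in [set v | p (f v)]].
Proof.
apply/setP => -[y x]; rewrite inE swap_labellingE.
apply/idP/imsetP => [pfxy|[[x' y'] pfxy' [-> ->]]]; last by rewrite inE in pfxy'.
by exists (x, y); rewrite ?inE.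
Qed.

Lemma two_set_swap : two_set swap_labelling = [set (v.2, v.1) | v in two_set f].
Proof. exact: (label_set_swap (fun i => val i == 2)). Qed.

Lemma mem_two_set_swap y x : ((y, x) \in two_set swap_labelling) = ((x, y) \in two_set f).
Proof. by rewrite !inE swap_labellingE. Qed.

Lemma card_set_swap (A : {set T1 * T2}) : #|[set (v.2, v.1) | v in A]| = #|A|.
Proof. by rewrite card_imset // => -[x y] [x' y'] [-> ->]. Qed.

Lemma card_two_set_swap : #|two_set swap_labelling| = #|two_set f|.
Proof. by rewrite two_set_swap card_set_swap. Qed.

Lemma card_pos_set_swap : #|pos_set swap_labelling| = #|pos_set f|.
Proof. by rewrite [pos_set _](label_set_swap (fun i => 0 < val i)) card_set_swap. Qed.

Lemma trdf_swap : trdf (direct_prod e1 e2) f -> trdf (direct_prod e2 e1) swap_labelling.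
Proof.
have swap_dom (p : pred 'I_3) x y :
    [exists u, direct_prod e1 e2 (x, y) u && p (f u)] ->
    [exists u, direct_prod e2 e1 (y, x) u && p (swap_labelling u)].
  move=> /existsP [[a b] /andP [/andP [xa yb] pab]].
  by apply/existsP; exists (b, a); rewrite /direct_prod /= xa yb swap_labellingE.
case/andP => /forallP dom0 /forallP domP; apply/andP; split; apply/forallP => [[y x]].
- rewrite swap_labellingE; apply/implyP => /(implyP (dom0 (x, y))).
  exact: (swap_dom (fun i => val i == 2)).
- rewrite swap_labellingE; apply/implyP => /(implyP (domP (x, y))).
  exact: (swap_dom (fun i => 0 < val i)).
Qed.

End Swap.

Lemma gamma_tR_direct_prodC (T1 T2 : finType) (e1 : rel T1) (e2 : rel T2) :
  no_isolated e1 -> no_isolated e2 ->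
  gamma_tR (direct_prod e2 e1) = gamma_tR (direct_prod e1 e2).
Proof.
suff le (T T' : finType) (r : rel T) (r' : rel T') : no_isolated r -> no_isolated r' ->
    gamma_tR (direct_prod r' r) <= gamma_tR (direct_prod r r').
  by move=> nG nH; apply/eqP; rewrite eqn_leq !le.
move=> nr nr'; have [f tf ->] := gamma_tR_attained (direct_prod_no_isolated nr nr').
by rewrite -trdf_weight_swap; apply/gamma_tR_le/trdf_swap.
Qed.

(** * Lower bounds *)

Definition gamma6_cond (T1 T2 : finType) (e1 : rel T1) (e2 : rel T2) : Prop :=
  [\/ 2 <= #|universals e1| /\ 2 <= #|universals e2| /\ (3 <= #|T1| \/ 3 <= #|T2|),
      (isK2 e1 /\ 3 <= #|T2| /\ has_universal e2) \/ (isK2 e2 /\ 3 <= #|T1| /\ has_universal e1)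
    | triangle_centered e1 /\ triangle_centered e2].

Definition small_weight_constraints (T1 T2 : finType) (e1 : rel T1) (e2 : rel T2) (w : nat) :
  Prop :=
  [/\ 4 <= w,
      w <= 5 -> isK2 e1 /\ isK2 e2,
      w <= 6 -> gamma6_cond e1 e2 \/ (isK2 e1 /\ isK2 e2) &
      w <= 7 -> (has_universal e1 /\ has_universal e2) \/
                (triangle_centered e1 /\ triangle_centered e2)].

Section Symmetry.
Variables (T1 T2 : finType) (e1 : rel T1) (e2 : rel T2).

Lemma gamma6_condC : gamma6_cond e2 e1 -> gamma6_cond e1 e2.
Proof.
by case=> [[? [? ?]]|[?|?]|[? ?]]; [apply: Or31 | apply: Or32 | apply: Or32 | apply: Or33]; tauto.
Qed.

Lemma small_weight_constraintsC w :
  small_weight_constraints e2 e1 w -> small_weight_constraints e1 e2 w.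
Proof.
case=> w4 w5 w6 w7; split=> // [/w5|/w6|/w7]; try tauto.
by case=> [/gamma6_condC|]; tauto.
Qed.

Lemma small_weight_constraints_ge8 w : 8 <= w -> small_weight_constraints e1 e2 w.
Proof. by move=> w8; split=> *; lia. Qed.

End Symmetry.

Section FactorOrders.
Variables (T1 T2 : finType) (e1 : rel T1) (e2 : rel T2).
Hypotheses (sG : simple_graph e1) (sH : simple_graph e2).
Hypotheses (nG : no_isolated e1) (nH : no_isolated e2).
Variables (x0 : T1) (y0 : T2).
Local Notation n := #|T1|.
Local Notation m := #|T2|.

Let n2 : 2 <= n := card_ge2 sG nG x0.
Let m2 : 2 <= m := card_ge2 sH nH y0.

Lemma K2_of_card_sum_le4 : n + m <= 4 -> isK2 e1 /\ isK2 e2.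
Proof. by move=> le4; split; apply: isK2_of_card2 => //; lia. Qed.

Lemma universal_of_card_sum_le5 : n + m <= 5 -> has_universal e1 /\ has_universal e2.
Proof.
move=> le5; split.
  by apply: (has_universal_of_card_le3 sG nG x0); lia.
by apply: (has_universal_of_card_le3 sH nH y0); lia.
Qed.

Lemma gamma6_of_card_sum_le5 : n + m <= 5 -> gamma6_cond e1 e2 \/ (isK2 e1 /\ isK2 e2).
Proof.
move=> le5; have [U1 U2] := universal_of_card_sum_le5 le5.
have [n2'|n3] : n = 2 \/ 3 <= n by lia.
  have [m2'|m3] : m = 2 \/ 3 <= m by lia.
    by right; split; apply: isK2_of_card2.
  by left; apply: Or32; left; split=> //; apply: isK2_of_card2.
by left; apply: Or32; right; split=> //; apply: isK2_of_card2 => //; lia.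
Qed.

End FactorOrders.

Section Cross.
Variables (T1 T2 : finType).

Definition cross (a : T1) (b : T2) : {set T1 * T2} :=
  setX [set a] [set: T2] :|: setX [set: T1] [set b].

Lemma mem_cross a b x y : ((x, y) \in cross a b) = (x == a) || (y == b).
Proof. by rewrite /cross !inE andbT. Qed.

Lemma card_cross a b : (#|cross a b|).+1 = #|T1| + #|T2|.
Proof.
rewrite /cross cardsU.
have -> : setX [set a] [set: T2] :&: setX [set: T1] [set b] = [set (a, b)].
  by apply/setP => [[x y]]; rewrite !inE xpair_eqE andbT andTb.
rewrite !cardsX !cards1 !cardsT mul1n muln1.
have: 0 < #|T1| by apply/card_gt0P; exists a.
by lia.
Qed.

End Cross.

Ltac simpl_neqs :=
  repeat match goal with
  | H : is_true (?x != ?y) |- context [?x == ?y] => rewrite (negbTE H)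
  | H : is_true (?x != ?y) |- context [?y == ?x] => rewrite [y == x]eq_sym (negbTE H)
  end;
  rewrite ?eqxx ?andbF ?andFb ?andbT ?andTb ?orbF ?orFb ?orbT ?orTb /=.

Section ProductTRDF.
Variables (T1 T2 : finType) (e1 : rel T1) (e2 : rel T2).
Hypotheses (sG : simple_graph e1) (sH : simple_graph e2).
Hypotheses (nG : no_isolated e1) (nH : no_isolated e2).
Variable f : {ffun T1 * T2 -> 'I_3}.
Hypothesis tf : trdf (direct_prod e1 e2) f.

Local Notation P := (pos_set f).
Local Notation V := (two_set f).
Local Notation w := (trdf_weight f).
Local Notation n := #|T1|.
Local Notation m := #|T2|.

Lemma pos_of_undominated x y :
  (forall s, s \in V -> ~~ (e1 x s.1 && e2 y s.2)) -> (x, y) \in P.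
Proof.
move=> undom; rewrite inE lt0n; apply/negP => /eqP fxy0.
case/andP: tf => /forallP /(_ (x, y)); rewrite fxy0 => /existsP [s /andP [xys fs]] _.
by move: (undom s); rewrite inE fs => /(_ isT) /negP.
Qed.

Lemma dominated_of_not_pos x y : (x, y) \notin P -> exists2 s, s \in V & e1 x s.1 && e2 y s.2.
Proof.
move=> nP; apply/exists_inP; apply: contraNT nP => /exists_inPn undom.
by apply: pos_of_undominated => s /undom.
Qed.

Lemma pos_nbr x y : (x, y) \in P -> exists c d, [/\ (c, d) \in P, e1 x c & e2 y d].
Proof.
rewrite inE => fxy; case/andP: tf => _ /forallP /(_ (x, y)) /implyP /(_ fxy).
by case/existsP => [[c d] /andP [/andP /= [xc yd] fcd]]; exists c, d; rewrite inE.
Qed.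

Lemma no_two_constraints (x0 : T1) (y0 : T2) :
  V = set0 -> small_weight_constraints e1 e2 w.
Proof.
move=> V0; have PT : P = [set: T1 * T2].
  by apply/setP => -[x y]; rewrite in_setT; apply: pos_of_undominated => s; rewrite V0 inE.
have -> : w = n * m by rewrite trdf_weightE V0 PT cards0 addn0 cardsT card_prod.
have := card_ge2 sG nG x0; have := card_ge2 sH nH y0 => m2 n2.
split=> [|le|le|le]; first by nia.
- by apply: (K2_of_card_sum_le4 sG sH nG nH x0 y0); nia.
- by apply: (gamma6_of_card_sum_le5 sG sH nG nH x0 y0); nia.
- by left; apply: (universal_of_card_sum_le5 sG sH nG nH x0 y0); nia.
Qed.

Lemma one_two_constraints a b :
  V = [set (a, b)] -> small_weight_constraints e1 e2 w.
Proof.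
move=> Vab.
have crossP : cross a b \subset P.
  apply/subsetP => -[x y]; rewrite mem_cross => xy; apply: pos_of_undominated => s.
  by rewrite Vab inE => /eqP -> /=; case/orP: xy => /eqP ->; rewrite adj_irr ?andbF.
have Pab : (a, b) \in P by apply: two_set_sub; rewrite Vab set11.
have [c [d [Pcd ac bd]]] := pos_nbr Pab.
have [ca db] : c != a /\ d != b by rewrite eq_sym (adj_neq sG ac) eq_sym (adj_neq sH bd).
have cdX : (c, d) \notin cross a b by rewrite mem_cross negb_or ca.
have sub1 : (c, d) |: cross a b \subset P by rewrite subUset sub1set Pcd.
have sumP : n + m <= #|P| by move: (subset_leq_card sub1); rewrite cardsU1 cdX -(card_cross a b).
have extra p : p \in P -> p \notin (c, d) |: cross a b -> n + m < #|P|.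
  move=> Pp pX; have sub2 : p |: ((c, d) |: cross a b) \subset P by rewrite subUset sub1set Pp.
  by move: (subset_leq_card sub2); rewrite !cardsU1 pX cdX -(card_cross a b).
have universal_or_large : (universal e1 a /\ universal e2 b) \/ n + m < #|P|.
  have [Ua|/forallPn [x]] := boolP (universal e1 a).
    have [Ub|/forallPn [y]] := boolP (universal e2 b); first by left.
    rewrite negb_imply => /andP [yb nby]; right; apply: (extra (c, y)).
      apply: pos_of_undominated => s; rewrite Vab inE => /eqP -> /=.
      by rewrite (adj_sym sH) (negbTE nby) andbF.
    rewrite in_setU1 mem_cross xpair_eqE eqxx (negbTE ca) (negbTE yb) /= orbF.
    by apply: contraNneq nby => ->.
  rewrite negb_imply => /andP [xa nax]; right; apply: (extra (x, d)).
    apply: pos_of_undominated => s; rewrite Vab inE => /eqP -> /=.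
    by rewrite (adj_sym sG) (negbTE nax).
  rewrite in_setU1 mem_cross xpair_eqE eqxx (negbTE xa) (negbTE db) /= andbT orbF.
  by apply: contraNneq nax => ->.
have -> : w = #|P| + 1 by rewrite trdf_weightE Vab cards1.
have := card_ge2 sG nG a; have := card_ge2 sH nH b => m2 n2.
split=> [|le|le|le]; first by lia.
- by apply: (K2_of_card_sum_le4 sG sH nG nH a b); lia.
- by apply: (gamma6_of_card_sum_le5 sG sH nG nH a b); lia.
- left; case: universal_or_large => [[Ua Ub]|lt]; first by split; [exists a | exists b].
  by apply: (universal_of_card_sum_le5 sG sH nG nH a b); lia.
Qed.


(* The rows of the non-neighbours of a are undominated, and the positive neighbours
   of (a, b) and of (a, d) lie outside them. *)
Lemma twos_in_row_card a b : (a, b) \in V -> {subset V <= [pred s | s.1 == a]} ->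
  #|nonadj e1 a| * m + 2 <= #|P|.
Proof.
move=> Vab Vrow; set N := nonadj e1 a.
have rowsP : setX N [set: T2] \subset P.
  apply/subsetP => -[x y]; rewrite in_setX in_setT andbT inE => nxa.
  by apply: pos_of_undominated => s /Vrow /eqP /= ->; rewrite (negbTE nxa).
have [c [d [Pcd ac bd]]] := pos_nbr (two_set_sub Vab).
have [c' [d' [Pcd' ac' dd']]] : exists c' d', [/\ (c', d') \in P, e1 a c' & e2 d d'].
  by apply: pos_nbr; apply: (subsetP rowsP); rewrite in_setX in_setT andbT (nonadj_self sG).
have outside x y : e1 a x -> (x, y) \notin setX N [set: T2].
  by rewrite in_setX in_setT andbT inE negbK (adj_sym sG).
have cd_neq : (c, d) != (c', d') by rewrite xpair_eqE negb_and (adj_neq sH dd') orbT.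
have sub : (c, d) |: ((c', d') |: setX N [set: T2]) \subset P by rewrite !subUset !sub1set Pcd Pcd'.
move: (subset_leq_card sub); rewrite !cardsU1 in_setU1 negb_or cd_neq !outside // cardsX cardsT.
by move=> /=; lia.
Qed.

Lemma twos_in_row_constraints a : {subset V <= [pred s | s.1 == a]} -> 2 <= #|V| ->
  small_weight_constraints e1 e2 w.
Proof.
move=> Vrow V2.
have [[a' b] Vab] : exists s, s \in V by apply/card_gt0P; apply: leq_trans V2.
have a'a : a' = a by apply/eqP; apply: Vrow Vab.
rewrite {a'}a'a in Vab.
have cardP := twos_in_row_card Vab Vrow.
have Vm : #|V| <= m.
  rewrite -[m]mul1n -(cards1 a) -cardsT -cardsX.
  apply/subset_leq_card/subsetP => -[x y] /Vrow /eqP /= ->.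
  by rewrite in_setX set11 in_setT.
have N1 := card_nonadj_gt0 sG a.
have universal_a : #|P| <= 2 * m + 1 -> universal e1 a.
  by move=> le; apply: (universal_of_card_nonadj sG); nia.
have := card_ge2 sG nG a; have := card_ge2 sH nH b => m2 n2.
rewrite trdf_weightE; split=> [|le|le|le]; [nia | nia | |].
- have m2' : m = 2 by nia.
  have K2H := isK2_of_card2 sH nH m2'.
  have [n2'|n3] : n = 2 \/ 3 <= n by lia.
    by right; split => //; apply: isK2_of_card2.
  left; apply: Or32; right; do 2!split=> //.
  by exists a; apply: universal_a; nia.
- left; split; first by exists a; apply: universal_a; nia.
  by apply: (has_universal_of_card_le3 sH nH b); nia.
Qed.

(* The vertices (x, b1) with x ≁ a2 and (x, b2) with x ≁ a1 are undominated. *)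
Lemma two_twos_diag_card a1 b1 a2 b2 : V = [set (a1, b1); (a2, b2)] -> b1 != b2 -> e1 a1 a2 ->
  #|nonadj e1 a1| + #|nonadj e1 a2| + 2 <= #|P|.
Proof.
move=> Vdef b12 a12.
set C1 := setX (a1 |: nonadj e1 a2) [set b1]; set C2 := setX (a2 |: nonadj e1 a1) [set b2].
have V1 : (a1, b1) \in P by apply: two_set_sub; rewrite Vdef !inE eqxx.
have V2 : (a2, b2) \in P by apply: two_set_sub; rewrite Vdef !inE eqxx orbT.
have colsP : C1 :|: C2 \subset P.
  apply/subsetP => -[x y] /setUP [] /setXP [/setU1P [-> | nxa] /set1P ->] //;
  rewrite inE in nxa; apply: pos_of_undominated => s; rewrite Vdef !inE => /orP [] /eqP -> /=;
  by rewrite ?(adj_irr sG) ?(adj_irr sH) ?andbF ?(negbTE nxa).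
have C12 : C1 :&: C2 = set0.
  by apply/setP => -[x y]; rewrite !inE /=; case: (y =P b1) => [->|]; rewrite ?(negbTE b12) ?andbF.
move: (subset_leq_card colsP); rewrite cardsU C12 cards0 subn0 !cardsX !cards1 !muln1 !cardsU1.
by rewrite !inE !negbK a12 (adj_sym sG) a12 /=; lia.
Qed.

Lemma two_twos_diag_nonadj_card a1 b1 a2 b2 : V = [set (a1, b1); (a2, b2)] ->
  a1 != a2 -> b1 != b2 -> ~~ (e1 a1 a2 && e2 b1 b2) -> 6 <= #|P|.
Proof.
move=> Vdef a12 b12 nadj.
have undom x y : ~~ (e1 x a1 && e2 y b1) -> ~~ (e1 x a2 && e2 y b2) -> (x, y) \in P.
  by move=> n1 n2; apply: pos_of_undominated => s; rewrite Vdef !inE => /orP [] /eqP ->.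
have P11 : (a1, b1) \in P by apply: two_set_sub; rewrite Vdef !inE eqxx.
have P22 : (a2, b2) \in P by apply: two_set_sub; rewrite Vdef !inE eqxx orbT.
have P12 : (a1, b2) \in P by apply: undom; rewrite ?(adj_irr sG) ?(adj_irr sH) ?andbF.
have P21 : (a2, b1) \in P by apply: undom; rewrite ?(adj_irr sG) ?(adj_irr sH) ?andbF.
have [c [d [Pcd a1c b1d]]] := pos_nbr P11.
have [ca1 db1] : c != a1 /\ d != b1 by rewrite eq_sym (adj_neq sG a1c) eq_sym (adj_neq sH b1d).
have cd22 : (c, d) != (a2, b2) by apply: (contraNneq _ nadj) => -[<- <-]; rewrite a1c b1d.
set S := [:: (c, d); (a1, b1); (a2, b2); (a1, b2); (a2, b1)].
have uS : uniq S by rewrite /S /= !inE (negbTE cd22) !xpair_eqE; simpl_neqs.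
(* If P = S, then (c, d) is also the positive neighbour of (a2, b2), and (c, b1) or (a1, d)
   is a positive vertex outside S. *)
have [//|le5] := leqP 6 #|P|; exfalso.
have PS : {subset P <= S}.
  apply: sub_uniq_of_card_le => //.
  by move=> s; rewrite /S !in_cons in_nil orbF => /orP [/eqP -> | /or4P [] /eqP ->].
have [c' [d' [Pcd' a2c' b2d']]] := pos_nbr P22.
have [c'a2 d'b2] : c' != a2 /\ d' != b2.
  by rewrite eq_sym (adj_neq sG a2c') eq_sym (adj_neq sH b2d').
have c'd'11 : (c', d') != (a1, b1).
  apply: (contraNneq _ nadj) => -[ec ed].
  by rewrite (adj_sym sG) (adj_sym sH) -ec -ed a2c' b2d'.
move: (PS _ Pcd'); rewrite !inE (negbTE c'd'11) !xpair_eqE; simpl_neqs.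
move=> /andP [/eqP ec /eqP ed].
rewrite {c' c'a2 c'd'11 Pcd'}ec in a2c'; rewrite {d' d'b2}ed in b2d'.
have [ca2 db2] : c != a2 /\ d != b2 by rewrite eq_sym (adj_neq sG a2c') eq_sym (adj_neq sH b2d').
have [a12adj|a12nadj] := boolP (e1 a1 a2).
  have Pcb1 : (c, b1) \in P.
    apply: undom; first by rewrite (adj_irr sH) andbF.
    by move: nadj; rewrite a12adj andTb => /negbTE ->; rewrite andbF.
  by move: (PS _ Pcb1); rewrite !inE !xpair_eqE; simpl_neqs.
have Pa1d : (a1, d) \in P by apply: undom; rewrite ?(adj_irr sG) ?(negbTE a12nadj).
by move: (PS _ Pa1d); rewrite !inE !xpair_eqE; simpl_neqs.
Qed.

Section ThreeTwosRow.
Variables (a a3 : T1) (b1 b2 b3 : T2).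
Hypotheses (Vdef : V = [set (a, b1); (a, b2); (a3, b3)]) (b12 : b1 != b2) (a3a : a3 != a).

Lemma three_row_pos x y :
  ~~ (e1 x a && e2 y b1) -> ~~ (e1 x a && e2 y b2) -> ~~ (e1 x a3 && e2 y b3) -> (x, y) \in P.
Proof.
move=> n1 n2 n3; apply: pos_of_undominated => s.
by rewrite Vdef !inE -orbA => /or3P [] /eqP ->.
Qed.

Lemma three_row_twos_pos : [/\ (a, b1) \in P, (a, b2) \in P & (a3, b3) \in P].
Proof. by split; apply: two_set_sub; rewrite Vdef !inE eqxx ?orbT. Qed.

Lemma three_row_card : 4 <= #|P|.
Proof.
have [P1 P2 P3] := three_row_twos_pos.
have [//|le3] := leqP 4 #|P|; exfalso.
have PS : {subset P <= [:: (a, b1); (a, b2); (a3, b3)]}.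
  apply: sub_uniq_of_card_le => //; first by rewrite /= !inE !xpair_eqE; simpl_neqs.
  by move=> s; rewrite !in_cons in_nil orbF => /or3P [] /eqP ->.
have [c [d [Pcd ac b1d]]] := pos_nbr P1.
have ca := adj_neq sG ac.
move: (PS _ Pcd); rewrite !inE !xpair_eqE; simpl_neqs; move=> /andP [/eqP ec /eqP ed].
rewrite {c ca Pcd}ec {d Pcd}ed in ac b1d.
have b13 := adj_neq sH b1d.
have Pab3 : (a, b3) \in P by apply: three_row_pos; rewrite ?(adj_irr sG) ?(adj_irr sH) ?andbF.
move: (PS _ Pab3); rewrite !inE !xpair_eqE; simpl_neqs; move=> /eqP eb.
have [c' [d' [Pcd' ac' b2d']]] := pos_nbr P2.
have ac'' := adj_neq sG ac'.
move: (PS _ Pcd'); rewrite !inE !xpair_eqE; simpl_neqs; move=> /andP [_ /eqP ed'].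
by move: b2d'; rewrite ed' -eb (adj_irr sH).
Qed.

Variable z : T1 * T2.
Hypothesis PzV : {subset P <= z |: V}.

(* For a non-neighbour x != a3 of a, the undominated vertex (x, b3) must be z, which then
   has no positive neighbour; for x = a3, z is the common positive neighbour of (a, b1) and
   (a, b2), so the undominated (a3, b1) and (a3, b2) must both be (a3, b3). *)
Lemma three_row_universal_fst : universal e1 a.
Proof.
have [P1 P2 _] := three_row_twos_pos.
apply/forallP => x; apply/implyP => xa; apply/negPn/negP => nax.
have nxa : e1 x a = false by rewrite (adj_sym sG) (negbTE nax).
have [ex|xa3] := eqVneq x a3.
  rewrite {x xa}ex in nax nxa.
  have to_z b : (a, b) \in P -> exists c d, [/\ z = (c, d), c != a3 & e2 b d].
    move=> /pos_nbr [c [d [Pcd ac bd]]]; exists c, d.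
    have ca := adj_neq sG ac; have ca3 : c != a3 by apply: (contraNneq _ nax) => <-.
    by move: (PzV Pcd); rewrite in_setU1 Vdef !inE !xpair_eqE; simpl_neqs; move=> /eqP.
  have [c [d [ez ca3 b1d]]] := to_z _ P1; have [c' [d' [ez' _ b2d']]] := to_z _ P2.
  move: ez'; rewrite ez => -[ec ed]; rewrite -{d'}ed in b2d'.
  have on_b3 b : (a3, b) \in P -> b = b3.
    move=> /PzV; rewrite in_setU1 Vdef ez !inE !xpair_eqE; simpl_neqs.
    by move=> /eqP.
  have Pa3 b : (a3, b) \in P by apply: three_row_pos; rewrite ?nxa ?(adj_irr sG).
  by move: b12; rewrite (on_b3 _ (Pa3 b1)) (on_b3 _ (Pa3 b2)) eqxx.
have Pxb3 : (x, b3) \in P by apply: three_row_pos; rewrite ?nxa ?(adj_irr sH) ?andbF.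
move: (PzV Pxb3); rewrite in_setU1 Vdef !inE !xpair_eqE; simpl_neqs; move=> /eqP ez.
have [c [d [Pcd xc b3d]]] := pos_nbr Pxb3.
have [xc' b3d'] := (adj_neq sG xc, adj_neq sH b3d).
have ca : c != a by apply: contraFneq nxa => <-.
by move: (PzV Pcd); rewrite in_setU1 Vdef -ez !inE !xpair_eqE; simpl_neqs.
Qed.

Lemma three_row_universal_snd_dup : b3 = b1 -> universal e2 b1.
Proof.
move=> eb; have [P1 _ _] := three_row_twos_pos.
have a3a' : e1 a3 a := adj_universal sG three_row_universal_fst a3a.
have [c [d [Pcd ac b1d]]] := pos_nbr P1.
have [ac' b1d'] := (adj_neq sG ac, adj_neq sH b1d).
move: (PzV Pcd); rewrite in_setU1 Vdef eb !inE !xpair_eqE; simpl_neqs; move=> /eqP ez.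
apply/forallP => y; apply/implyP => yb1; apply/negPn/negP => nby.
have nyb1 : e2 y b1 = false by rewrite (adj_sym sH) (negbTE nby).
have Pay : (a, y) \in P by apply: three_row_pos; rewrite ?(adj_irr sG) // eb nyb1 andbF.
move: (PzV Pay); rewrite in_setU1 Vdef -ez !inE !xpair_eqE; simpl_neqs; move=> /eqP eyb2.
rewrite {y yb1 Pay}eyb2 in nby nyb1.
have db2 : d != b2 by apply: (contraNneq _ nby) => <-.
have Pa3b2 : (a3, b2) \in P.
  by apply: three_row_pos; rewrite ?nyb1 ?(adj_irr sG) ?(adj_irr sH) ?andbF.
by move: (PzV Pa3b2); rewrite in_setU1 Vdef -ez eb !inE !xpair_eqE; simpl_neqs.
Qed.

Lemma three_row_universal_snd_new : z = (a, b3) -> universal e2 b3.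
Proof.
move=> ez; have [P1 P2 _] := three_row_twos_pos.
have to_b3 b : (a, b) \in P -> e2 b b3.
  move=> /pos_nbr [c [d [Pcd ac bd]]]; have ac' := adj_neq sG ac.
  move: (PzV Pcd); rewrite in_setU1 Vdef ez !inE !xpair_eqE; simpl_neqs.
  by move=> /andP [_ /eqP <-].
have [b13 b23] := (to_b3 _ P1, to_b3 _ P2).
apply/forallP => y; apply/implyP => yb3; apply/negPn/negP => nby.
have [yb1 yb2] : y != b1 /\ y != b2.
  by split; apply: (contraNneq _ nby) => ->; rewrite (adj_sym sH).
have Pay : (a, y) \in P.
  by apply: three_row_pos; rewrite ?(adj_irr sG) // (adj_sym sH) (negbTE nby) andbF.
by move: (PzV Pay); rewrite in_setU1 Vdef ez !inE !xpair_eqE; simpl_neqs.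
Qed.

End ThreeTwosRow.

Lemma three_twos_row_constraints a b1 b2 : #|V| = 3 -> (a, b1) \in V -> (a, b2) \in V ->
  b1 != b2 -> (exists2 s, s \in V & s.1 != a) -> small_weight_constraints e1 e2 w.
Proof.
move=> V3 V1 V2 b12 [[x y] Vxy /= xa].
have p12 : (a, b1) != (a, b2) by rewrite xpair_eqE eqxx.
have [[a3 b3] [_ _ Vdef]] := set3_ext_of_card3 V3 V1 V2 p12.
have a3a : a3 != a.
  apply: contraNneq xa => a3a; move: Vxy; rewrite Vdef !inE !xpair_eqE a3a -!orbA.
  by case/or3P => /andP [/eqP ->].
have card4 := three_row_card Vdef b12 a3a.
rewrite trdf_weightE V3; split=> [|le|le|le]; try lia.
have [z PzV] : exists z, {subset P <= z |: V}.
  by apply: pos_set_sub_cons; rewrite V3 //; lia.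
left; split; first by exists a; apply: (three_row_universal_fst Vdef b12 a3a PzV).
have Pab3 : (a, b3) \in P.
  by apply: (three_row_pos Vdef); rewrite ?(adj_irr sG) ?(adj_irr sH) ?andbF.
move: (PzV _ Pab3); rewrite in_setU1 Vdef !inE !xpair_eqE eqxx; simpl_neqs.
case/or3P => [/eqP ez|/eqP eb|/eqP eb].
- by exists b3; apply: (three_row_universal_snd_new Vdef a3a PzV).
- by exists b1; apply: (three_row_universal_snd_dup Vdef b12 a3a PzV).
- exists b2; apply: (three_row_universal_snd_dup (b2 := b1) _ _ a3a PzV eb).
    by rewrite Vdef [[set (a, b1); _]]setUC.
  by rewrite eq_sym.
Qed.

Section ThreeTwosDiagonal.
Hypotheses (V3 : #|V| = 3)
  (Vdiag : {in V &, forall s t, s != t -> (s.1 != t.1) && (s.2 != t.2)}).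
Variable z : T1 * T2.
Hypothesis PzV : {subset P <= z |: V}.

(* One of (a1, b3), (a2, b3) is not z, so it is dominated, and only (a2, b2), resp.
   (a1, b1), can dominate it. *)
Lemma three_diag_edge a1 b1 a2 b2 : (a1, b1) \in V -> (a2, b2) \in V -> (a1, b1) != (a2, b2) ->
  e1 a1 a2.
Proof.
move=> V1 V2 p12; have [[a3 b3] [p31 p32 Vdef]] := set3_ext_of_card3 V3 V1 V2 p12.
have V3' : (a3, b3) \in V by rewrite Vdef !inE eqxx orbT.
have /andP [a12 b12] := Vdiag V1 V2 p12.
have /andP [a31 b31] := Vdiag V3' V1 p31.
have /andP [a32 b32] := Vdiag V3' V2 p32.
have nV1 : (a1, b3) \notin V by rewrite Vdef !inE !xpair_eqE; simpl_neqs.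
have nV2 : (a2, b3) \notin V by rewrite Vdef !inE !xpair_eqE; simpl_neqs.
have [ez|nz] := eqVneq (a1, b3) z.
  have nP : (a2, b3) \notin P.
    by apply/negP => /PzV; rewrite in_setU1 -ez (negbTE nV2) xpair_eqE; simpl_neqs.
  have [s] := dominated_of_not_pos nP; rewrite Vdef !inE => /orP [/orP []|] /eqP -> /=.
  - by rewrite (adj_sym sG) => /andP [].
  - by rewrite (adj_irr sG).
  - by rewrite (adj_irr sH) andbF.
have nP : (a1, b3) \notin P.
  by apply/negP => /PzV; rewrite in_setU1 (negbTE nz) (negbTE nV1).
have [s] := dominated_of_not_pos nP; rewrite Vdef !inE => /orP [/orP []|] /eqP -> /=.
- by rewrite (adj_irr sG).
- by case/andP.
- by rewrite (adj_irr sH) andbF.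
Qed.

(* (v, p.2) is undominated; it is neither p, whose first coordinate is adjacent to the
   other ones, nor z, which would have no positive neighbour. *)
Lemma three_diag_vertex v p : p \in V -> (forall s, s \in V -> s != p -> ~~ e1 v s.1) -> False.
Proof.
case: p => a b Vab nadj.
have Pvb : (v, b) \in P.
  apply: pos_of_undominated => s Vs; have [->|sab] := eqVneq s (a, b).
    by rewrite /= (adj_irr sH) andbF.
  by rewrite (negbTE (nadj s Vs sab)).
move: (PzV Pvb); rewrite in_setU1 => /orP [/eqP ez|Vvb].
  have [c [d [Pcd vc bd]]] := pos_nbr Pvb.
  move: (PzV Pcd); rewrite in_setU1 -ez xpair_eqE => /orP [/andP [/eqP cv _]|Vcd].
    by move: vc; rewrite cv (adj_irr sG).
  have [[_ db]|cdab] := eqVneq (c, d) (a, b); first by move: bd; rewrite db (adj_irr sH).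
  by move: (nadj _ Vcd cdab); rewrite /= vc.
have [[va]|vbab] := eqVneq (v, b) (a, b); last by move: (Vdiag Vvb Vab vbab); rewrite eqxx andbF.
have [s] : exists s, s \in V :\ (a, b).
  by apply/card_gt0P; move: V3; rewrite (cardsD1 (a, b)) Vab add1n => -[->].
rewrite in_setD1 => /andP [sab Vs]; move: (nadj s Vs sab); rewrite va.
by case: s sab Vs => a2 b2 sab Vs; rewrite /= (three_diag_edge Vab Vs) // eq_sym.
Qed.

Lemma three_diag_triangle_centered : triangle_centered e1.
Proof.
have [[a1 b1] [[a2 b2] [[a3 b3] [p12 p31 p32 Vdef]]]] := set3_of_card3 V3.
have [V1 V2 V3'] : [/\ (a1, b1) \in V, (a2, b2) \in V & (a3, b3) \in V].
  by rewrite Vdef !inE !eqxx ?orbT.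
exists a1, a2, a3; split; first exact: three_diag_edge V1 V2 p12.
- by apply: three_diag_edge V2 V3' _; rewrite eq_sym.
- by apply: three_diag_edge V1 V3' _; rewrite eq_sym.
move=> v; case E1: (e1 v a1); case E2: (e1 v a2); case E3: (e1 v a3) => //; exfalso;
  [ apply: (three_diag_vertex (v := v) V1) | apply: (three_diag_vertex (v := v) V2)
  | apply: (three_diag_vertex (v := v) V3') | apply: (three_diag_vertex (v := v) V1) ];
  by move=> s; rewrite Vdef !inE => /orP [/orP []|] /eqP ->; rewrite /= ?eqxx ?E1 ?E2 ?E3.
Qed.

End ThreeTwosDiagonal.

Lemma three_twos_diag_triangle_centered : #|V| = 3 ->
  {in V &, forall s t, s != t -> (s.1 != t.1) && (s.2 != t.2)} -> #|P| <= 4 -> triangle_centered e1.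
Proof.
move=> V3 Vdiag le; have [z PzV] : exists z, {subset P <= z |: V}.
  by apply: pos_set_sub_cons; rewrite V3.
by apply: (three_diag_triangle_centered _ _ PzV).
Qed.

End ProductTRDF.

Section LowerBound.
Variables (T1 T2 : finType) (e1 : rel T1) (e2 : rel T2).
Hypotheses (sG : simple_graph e1) (sH : simple_graph e2).
Hypotheses (nG : no_isolated e1) (nH : no_isolated e2).
Variable f : {ffun T1 * T2 -> 'I_3}.
Hypothesis tf : trdf (direct_prod e1 e2) f.

Local Notation P := (pos_set f).
Local Notation V := (two_set f).
Local Notation w := (trdf_weight f).
Local Notation f' := (swap_labelling f).
Let tf' : trdf (direct_prod e2 e1) f' := trdf_swap tf.

Lemma small_weight_constraints_swap :
  small_weight_constraints e2 e1 (trdf_weight f') -> small_weight_constraints e1 e2 w.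
Proof. by rewrite trdf_weight_swap; apply: small_weight_constraintsC. Qed.

Lemma twos_in_col_constraints b : {subset V <= [pred s | s.2 == b]} -> 2 <= #|V| ->
  small_weight_constraints e1 e2 w.
Proof.
move=> Vcol V2; apply: small_weight_constraints_swap.
apply: (@twos_in_row_constraints _ _ _ _ sH sG nH nG _ tf' b).
  by move=> [y x]; rewrite mem_two_set_swap => /Vcol.
by rewrite card_two_set_swap.
Qed.

Lemma three_twos_col_constraints a1 a2 b : #|V| = 3 -> (a1, b) \in V -> (a2, b) \in V ->
  a1 != a2 -> (exists2 s, s \in V & s.2 != b) -> small_weight_constraints e1 e2 w.
Proof.
move=> V3 V1 V2 a12 [[x y] Vxy yb]; apply: small_weight_constraints_swap.
by apply: (@three_twos_row_constraints _ _ _ _ sH sG _ tf' b a1 a2);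
  rewrite ?card_two_set_swap ?mem_two_set_swap //; exists (y, x); rewrite ?mem_two_set_swap.
Qed.

Lemma two_twos_diag_constraints a1 b1 a2 b2 : V = [set (a1, b1); (a2, b2)] ->
  a1 != a2 -> b1 != b2 -> small_weight_constraints e1 e2 w.
Proof.
move=> Vdef a12 b12.
have -> : w = #|P| + 2 by rewrite trdf_weightE Vdef cards2 xpair_eqE (negbTE a12).
have [/andP [adj1 adj2]|nadj] := boolP (e1 a1 a2 && e2 b1 b2); last first.
  have := two_twos_diag_nonadj_card sG sH tf Vdef a12 b12 nadj.
  by move=> P6; apply: small_weight_constraints_ge8; lia.
have cardG := two_twos_diag_card sG sH tf Vdef b12 adj1.
have Vdef' : two_set f' = [set (b1, a1); (b2, a2)] by rewrite two_set_swap Vdef imsetU1 imset_set1.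
have cardH := two_twos_diag_card sH sG tf' Vdef' a12 adj2; rewrite card_pos_set_swap in cardH.
have [NG1 NG2] := (card_nonadj_gt0 sG a1, card_nonadj_gt0 sG a2).
have [NH1 NH2] := (card_nonadj_gt0 sH b1, card_nonadj_gt0 sH b2).
split=> [|le|le|le]; try lia.
- have [U1 U2 U3 U4] : [/\ universal e1 a1, universal e1 a2, universal e2 b1 & universal e2 b2].
    by split; apply: universal_of_card_nonadj => //; lia.
  have [uG uH] := (universals_ge2 U1 U2 a12, universals_ge2 U3 U4 b12).
  have [n3|n2] := leqP 3 #|T1|; first by left; apply: Or31; do !split => //; left.
  have [m3|m2] := leqP 3 #|T2|; first by left; apply: Or31; do !split => //; right.
  by right; apply: (K2_of_card_sum_le4 sG sH nG nH a1 b1); lia.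
- left; split.
    have [u|u] : #|nonadj e1 a1| <= 1 \/ #|nonadj e1 a2| <= 1 by lia.
      by exists a1; apply: (universal_of_card_nonadj sG u).
    by exists a2; apply: (universal_of_card_nonadj sG u).
  have [u|u] : #|nonadj e2 b1| <= 1 \/ #|nonadj e2 b2| <= 1 by lia.
    by exists b1; apply: (universal_of_card_nonadj sH u).
  by exists b2; apply: (universal_of_card_nonadj sH u).
Qed.

Lemma two_twos_constraints : #|V| = 2 -> small_weight_constraints e1 e2 w.
Proof.
move=> V2; have /cards2P [[a1 b1] [[a2 b2] [p12 Vdef]]] : #|V| == 2 by rewrite V2.
have [ea|a12] := eqVneq a1 a2.
  apply: (@twos_in_row_constraints _ _ _ _ sG sH nG nH _ tf a1); last by rewrite V2.
  by move=> s; rewrite Vdef !inE => /orP [] /eqP -> /=; rewrite ea.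
have [eb|b12] := eqVneq b1 b2; last exact: two_twos_diag_constraints Vdef a12 b12.
apply: (twos_in_col_constraints (b := b1)); last by rewrite V2.
by move=> s; rewrite Vdef !inE => /orP [] /eqP -> /=; rewrite eb.
Qed.

Lemma three_twos_diag_constraints : #|V| = 3 ->
  {in V &, forall s t, s != t -> (s.1 != t.1) && (s.2 != t.2)} -> small_weight_constraints e1 e2 w.
Proof.
move=> V3 Vdiag; have V3' : #|two_set f'| = 3 by rewrite card_two_set_swap.
have Vdiag' : {in two_set f' &, forall s t, s != t -> (s.1 != t.1) && (s.2 != t.2)}.
  move=> [y x] [y' x']; rewrite !mem_two_set_swap => V1 V2 ne.
  by rewrite /= andbC; apply: (Vdiag _ _ V1 V2); rewrite xpair_eqE andbC -xpair_eqE.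
have tc : #|P| <= 4 -> triangle_centered e1 /\ triangle_centered e2.
  move=> le; split; first by apply: (three_twos_diag_triangle_centered sG sH tf V3).
  by apply: (three_twos_diag_triangle_centered sH sG tf' V3') => //; rewrite card_pos_set_swap.
have := card_two_set_le f; rewrite trdf_weightE V3 => P3.
split=> [|le|le|le]; try lia; [left; apply: Or33 | right]; apply: tc; lia.
Qed.

Lemma three_twos_constraints : #|V| = 3 -> small_weight_constraints e1 e2 w.
Proof.
move=> V3; have V2 : 2 <= #|V| by rewrite V3.
have [/existsP [a /forall_inP row]|norow] := boolP [exists a, [forall s in V, s.1 == a]].
  exact: (@twos_in_row_constraints _ _ _ _ sG sH nG nH _ tf a).
have [/existsP [b /forall_inP col]|nocol] := boolP [exists b, [forall s in V, s.2 == b]].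
  exact: (twos_in_col_constraints (b := b)).
have [pair1|npair1] := boolP [exists p in V, exists q in V, (p != q) && (p.1 == q.1)].
  case/exists_inP: pair1 => -[a b1] V1 /exists_inP [[a' b2] V2' /andP [p12 /eqP /= ea]].
  rewrite -{a'}ea in V2' p12; rewrite xpair_eqE eqxx /= in p12.
  apply: (three_twos_row_constraints sG sH tf V3 V1 V2' p12).
  by move/existsPn: norow => /(_ a) /forall_inPn [s Vs sa]; exists s.
have [pair2|npair2] := boolP [exists p in V, exists q in V, (p != q) && (p.2 == q.2)].
  case/exists_inP: pair2 => -[a1 b] V1 /exists_inP [[a2 b'] V2' /andP [p12 /eqP /= eb]].
  rewrite -{b'}eb in V2' p12; rewrite xpair_eqE eqxx /= andbT in p12.
  apply: (three_twos_col_constraints V3 V1 V2' p12).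
  by move/existsPn: nocol => /(_ b) /forall_inPn [s Vs sb]; exists s.
apply: three_twos_diag_constraints => // s t Vs Vt st; apply/andP; split.
  apply: contra npair1 => e; apply/exists_inP; exists s => //.
  by apply/exists_inP; exists t; rewrite ?st.
apply: contra npair2 => e; apply/exists_inP; exists s => //.
by apply/exists_inP; exists t; rewrite ?st.
Qed.

Lemma trdf_small_weight_constraints : 0 < w -> small_weight_constraints e1 e2 w.
Proof.
move=> w0; have [[x0 y0] _] : exists v, v \in P.
  by apply/card_gt0P; move: w0; rewrite trdf_weightE; have := card_two_set_le f; lia.
have [ge4|] := leqP 4 #|V|.
  by apply: small_weight_constraints_ge8; have := trdf_weight_ge_double_two f; lia.
case V0: #|V| => [|[|[|[|k]]]] // _.
- by apply: (no_two_constraints sG sH nG nH tf x0 y0); apply/eqP; rewrite -cards_eq0 V0.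
- have /cards1P [[a b] Vab] : #|V| == 1 by rewrite V0.
  exact: (one_two_constraints sG sH nG nH tf Vab).
- exact: two_twos_constraints.
- exact: three_twos_constraints.
Qed.

End LowerBound.

(** * Upper bounds *)

Section UpperBounds.
Variables (T1 T2 : finType) (e1 : rel T1) (e2 : rel T2).
Hypotheses (sG : simple_graph e1) (sH : simple_graph e2).
Hypotheses (nG : no_isolated e1) (nH : no_isolated e2).
Local Notation E := (direct_prod e1 e2).

Lemma gamma_tR_prod_le_K2 : isK2 e1 -> isK2 e2 -> gamma_tR E <= 4.
Proof.
move=> [c1 _] [c2 _]; apply: leq_trans (gamma_tR_le_card (direct_prod_no_isolated nG nH)) _.
by rewrite card_prod c1 c2.
Qed.

Lemma gamma_tR_prod_le_universals : 2 <= #|universals e1| -> 2 <= #|universals e2| ->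
  gamma_tR E <= 6.
Proof.
move=> /two_universals [u1 [u2 [u12 U1 U2]]] /two_universals [w1 [w2 [w12 W1 W2]]].
have a12 : e1 u1 u2 by apply: (adj_universal sG) => //; rewrite eq_sym.
have a21 : e1 u2 u1 by rewrite (adj_sym sG).
have b12 : e2 w1 w2 by apply: (adj_universal sH) => //; rewrite eq_sym.
have b21 : e2 w2 w1 by rewrite (adj_sym sH).
apply: (@gamma_tR_le_labelling _ _ [:: (u1, w2); (u2, w1)] [:: (u1, w1); (u2, w2)]) => [[x y]|v].
- rewrite !inE !xpair_eqE negb_or => /andP [n1 n2] _.
  have [xu1|xu1] := eqVneq x u1.
    rewrite {x}xu1 eqxx /= in n1 n2 *; exists (u2, w2); first by rewrite !inE eqxx orbT.
    by rewrite /direct_prod /= a12 (adj_universal sH).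
  have [yw1|yw1] := eqVneq y w1.
    rewrite {y}yw1 eqxx andbT in n1 n2 *; exists (u2, w2); first by rewrite !inE eqxx orbT.
    by rewrite /direct_prod /= b12 (adj_universal sG).
  exists (u1, w1); first by rewrite !inE eqxx.
  by rewrite /direct_prod /= (adj_universal sG) // (adj_universal sH).
- rewrite /= !inE => /or4P [] /eqP ->.
  + by exists (u2, w1); rewrite ?inE ?eqxx ?orbT // /direct_prod /= a12 b21.
  + by exists (u1, w2); rewrite ?inE ?eqxx ?orbT // /direct_prod /= a21 b12.
  + by exists (u2, w2); rewrite ?inE ?eqxx ?orbT // /direct_prod /= a12 b12.
  + by exists (u1, w1); rewrite ?inE ?eqxx ?orbT // /direct_prod /= a21 b21.
Qed.

Lemma gamma_tR_prod_le_K2_universal : isK2 e1 -> has_universal e2 -> gamma_tR E <= 6.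
Proof.
move=> [c1 K] [w W].
have [a [b [ab Eab]]] : exists a b, a != b /\ [set: T1] = [set a; b].
  by apply/cards2P; rewrite cardsT c1.
have other x : exists2 x', x' \in [:: a; b] & e1 x x'.
  have : x \in [set a; b] by rewrite -Eab inE.
  rewrite !inE => /orP [] /eqP ->; [exists b | exists a]; rewrite ?inE ?eqxx ?orbT //;
    by apply: K; rewrite // eq_sym.
have [y wy] := nH w.
have eab : e1 a b by apply: K.
have eba : e1 b a by rewrite (adj_sym sG).
have ewy : e2 y w by rewrite (adj_sym sH).
apply: (@gamma_tR_le_labelling _ _ [:: (a, y); (b, y)] [:: (a, w); (b, w)]) => [[x z]|v].
- move=> _; rewrite !inE !xpair_eqE => /norP [n1 n2].
  have zw : z != w.
    apply: (contraNneq _ n1) => zw; rewrite zw eqxx andbT in n2 *.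
    have : x \in [set a; b] by rewrite -Eab inE.
    by rewrite !inE andbT => /orP [// | /eqP xb]; move: n2; rewrite xb !eqxx.
  have [x' xs xx'] := other x.
  exists (x', w); first by move: xs; rewrite !inE => /orP [] /eqP ->; rewrite eqxx ?orbT.
  by rewrite /direct_prod /= xx' (adj_universal sH).
- rewrite /= !inE => /or4P [] /eqP ->.
  + by exists (b, w); rewrite ?inE ?eqxx ?orbT // /direct_prod /= eab ewy.
  + by exists (a, w); rewrite ?inE ?eqxx ?orbT // /direct_prod /= eba ewy.
  + by exists (b, y); rewrite ?inE ?eqxx ?orbT // /direct_prod /= eab wy.
  + by exists (a, y); rewrite ?inE ?eqxx ?orbT // /direct_prod /= eba wy.
Qed.

Lemma gamma_tR_prod_le_triangle_centered :
  triangle_centered e1 -> triangle_centered e2 -> gamma_tR E <= 6.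
Proof.
move=> [x [y [z [xy yz xz Hv]]]] [x' [y' [z' [xy' yz' xz' Hv']]]].
apply: (@gamma_tR_le_double _ _ [:: (x, x'); (y, y'); (z, z')]) => [[v v']].
have := Hv v; have := Hv' v'; rewrite /direct_prod /=.
case E1: (e1 v x); case E2: (e1 v y); case E3: (e1 v z);
case F1: (e2 v' x'); case F2: (e2 v' y'); case F3: (e2 v' z') => //= _ _;
first [ by exists (x, x'); rewrite ?inE ?eqxx //= ?E1 ?F1
      | by exists (y, y'); rewrite ?inE ?eqxx ?orbT //= ?E2 ?F2
      | by exists (z, z'); rewrite ?inE ?eqxx ?orbT //= ?E3 ?F3 ].
Qed.

Lemma gamma_tR_prod_le_universal : has_universal e1 -> has_universal e2 -> gamma_tR E <= 7.
Proof.
move=> [u U] [w W].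
have [a ua] := nG u; have [y wy] := nH w.
have au : a != u by rewrite eq_sym (adj_neq sG ua).
have yw : y != w by rewrite eq_sym (adj_neq sH wy).
have eau : e1 a u by rewrite (adj_sym sG).
have ewy : e2 y w by rewrite (adj_sym sH).
apply: (@gamma_tR_le_labelling _ _ [:: (a, y)] [:: (u, w); (u, y); (a, w)]) => [[p q]|v].
- rewrite !inE !xpair_eqE => _ /norP [n1 /norP [n2 _]].
  have [pu|pu] := eqVneq p u.
    rewrite pu eqxx /= in n1 *; exists (a, w); first by rewrite !inE eqxx !orbT.
    by rewrite /direct_prod /= ua (adj_universal sH).
  have [qw|qw] := eqVneq q w.
    rewrite qw; exists (u, y); first by rewrite !inE eqxx !orbT.
    by rewrite /direct_prod /= (adj_universal sG) // wy.
  exists (u, w); first by rewrite !inE eqxx.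
  by rewrite /direct_prod /= (adj_universal sG) // (adj_universal sH).
- rewrite /= !inE => /or4P [] /eqP ->.
  + by exists (u, w); rewrite ?inE ?eqxx ?orbT // /direct_prod /= eau ewy.
  + by exists (a, y); rewrite ?inE ?eqxx ?orbT // /direct_prod /= ua wy.
  + by exists (a, w); rewrite ?inE ?eqxx ?orbT // /direct_prod /= ua ewy.
  + by exists (u, y); rewrite ?inE ?eqxx ?orbT // /direct_prod /= eau wy.
Qed.

Lemma gamma_tR_prod_le_gamma_t : gamma_t e1 = 2 -> gamma_t e2 = 2 -> gamma_tR E <= 8.
Proof.
move=> /(gamma_t2_dominating_pair nG) [p [q Hpq]] /(gamma_t2_dominating_pair nH) [r [s Hrs]].
apply: (@gamma_tR_le_double _ _ [:: (p, r); (p, s); (q, r); (q, s)]) => [[v v']].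
have := Hpq v; have := Hrs v'; rewrite /direct_prod /=.
case/orP => h1; case/orP => h2;
first [ by exists (p, r); rewrite ?inE ?eqxx ?orbT //= ?h1 ?h2
      | by exists (p, s); rewrite ?inE ?eqxx ?orbT //= ?h1 ?h2
      | by exists (q, r); rewrite ?inE ?eqxx ?orbT //= ?h1 ?h2
      | by exists (q, s); rewrite ?inE ?eqxx ?orbT //= ?h1 ?h2 ].
Qed.

End UpperBounds.

Lemma gamma_tR_prod_le_gamma6 (T1 T2 : finType) (e1 : rel T1) (e2 : rel T2) :
  simple_graph e1 -> simple_graph e2 -> no_isolated e1 -> no_isolated e2 ->
  gamma6_cond e1 e2 -> gamma_tR (direct_prod e1 e2) <= 6.
Proof.
move=> sG sH nG nH; case=> [[u1 [u2 _]]|[[K [_ U]]|[K [_ U]]]|[t1 t2]].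
- exact: gamma_tR_prod_le_universals.
- exact: gamma_tR_prod_le_K2_universal.
- by rewrite -gamma_tR_direct_prodC //; apply: gamma_tR_prod_le_K2_universal.
- exact: gamma_tR_prod_le_triangle_centered.
Qed.

Definition gamma7_cond (T1 T2 : finType) (e1 : rel T1) (e2 : rel T2) : Prop :=
  [/\ has_universal e1, has_universal e2,
      (#|universals e1| = 1 /\ ~ isK2 e2) \/ (#|universals e2| = 1 /\ ~ isK2 e1)
    & ~ (triangle_centered e1 /\ triangle_centered e2)].

Section Conditions.
Variables (T1 T2 : finType) (e1 : rel T1) (e2 : rel T2).
Hypotheses (sG : simple_graph e1) (sH : simple_graph e2).
Hypotheses (nG : no_isolated e1) (nH : no_isolated e2).

Lemma gamma6_cond_card_gt0 : gamma6_cond e1 e2 -> 0 < #|T1| /\ 0 < #|T2|.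
Proof.
case=> [[u1 [u2 _]]|[[[c1 _] [m3 _]]|[[c2 _] [n3 _]]]|[t1 t2]].
- by have := max_card (universals e1); have := max_card (universals e2); split; lia.
- by rewrite c1; split=> //; apply: leq_trans m3.
- by rewrite c2; split=> //; apply: leq_trans n3.
- by have := triangle_centered_card sG t1; have := triangle_centered_card sH t2; split; lia.
Qed.

Lemma gamma6_cond_not_K2 : gamma6_cond e1 e2 -> isK2 e1 -> isK2 e2 -> False.
Proof.
move=> C [c1 _] [c2 _]; move: C; rewrite /gamma6_cond c1 c2.
case=> [[_ [_ []]]|[[_ []]|[_ []]]|[t1 _]] //.
by have := triangle_centered_card sG t1; rewrite c1.
Qed.

Lemma unique_universal_of_not_gamma6 : has_universal e1 -> has_universal e2 ->
  ~ gamma6_cond e1 e2 -> ~ (isK2 e1 /\ isK2 e2) ->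
  (#|universals e1| = 1 /\ ~ isK2 e2) \/ (#|universals e2| = 1 /\ ~ isK2 e1).
Proof.
move=> [u U] [w W] N6 NK.
have n2 := card_ge2 sG nG u; have m2 := card_ge2 sH nH w.
have p1 : 0 < #|universals e1| by apply/card_gt0P; exists u; rewrite inE.
have p2 : 0 < #|universals e2| by apply/card_gt0P; exists w; rewrite inE.
have [u1|u1] := eqVneq #|universals e1| 1.
  left; split=> // K2; apply: N6; apply: Or32; right; do 2!split=> //; last by exists u.
  have [//|n2'] := leqP 3 #|T1|.
  have K1 : isK2 e1 by apply: (isK2_of_card2 sG nG); lia.
  by move: u1; rewrite universals_K2.
have [w1|w1] := eqVneq #|universals e2| 1.
  right; split=> // K1; apply: N6; apply: Or32; left; do 2!split=> //; last by exists w.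
  have [//|m2'] := leqP 3 #|T2|.
  have K2 : isK2 e2 by apply: (isK2_of_card2 sH nH); lia.
  by move: w1; rewrite universals_K2.
exfalso; apply: N6; apply: Or31; split; [lia | split; [lia |]].
have [n3|n2'] := leqP 3 #|T1|; first by left.
have [m3|m2'] := leqP 3 #|T2|; first by right.
by case: NK; split; apply: isK2_of_card2 => //; lia.
Qed.

Lemma not_gamma6_of_gamma7 : gamma7_cond e1 e2 -> ~ gamma6_cond e1 e2.
Proof.
case=> _ _ C NT; case=> [[u1 [u2 _]]|[[K _]|[K _]]|//].
- by case: C => [[c _]|[c _]]; [move: u1|move: u2]; rewrite c.
- by move: (universals_K2 K); case: C => [[-> _]|[_ []]].
- by move: (universals_K2 K); case: C => [[_ []]|[-> _]].
Qed.

End Conditions.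

Section GammaProduct.
Variables (T1 T2 : finType) (e1 : rel T1) (e2 : rel T2).
Hypotheses (sG : simple_graph e1) (sH : simple_graph e2).
Hypotheses (nG : no_isolated e1) (nH : no_isolated e2).
Local Notation g := (gamma_tR (direct_prod e1 e2)).

Lemma gamma_tR_prod_gt0 : 0 < #|T1| -> 0 < #|T2| -> 0 < g.
Proof.
move=> /card_gt0P [x _] /card_gt0P [y _].
exact: (gamma_tR_gt0 (direct_prod_no_isolated nG nH) (x, y)).
Qed.

Lemma gamma_tR_prod_constraints k : g = k -> 0 < k -> small_weight_constraints e1 e2 k.
Proof.
have [f tf ->] := gamma_tR_attained (direct_prod_no_isolated nG nH).
by move=> <-; apply: trdf_small_weight_constraints.
Qed.

Lemma gamma_tR_prod_not1235 : g \notin [:: 1; 2; 3; 5].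
Proof.
rewrite !inE; apply/negP => /or4P [] /eqP eg.
all: case: (gamma_tR_prod_constraints eg isT) => // _ /(_ isT) [K1 K2].
by have := gamma_tR_prod_le_K2 nG nH K1 K2; rewrite eg.
Qed.

Lemma gamma_tR_prod_eq4 : g = 4 <-> isK2 e1 /\ isK2 e2.
Proof.
split=> [eg|[K1 K2]]; first by case: (gamma_tR_prod_constraints eg isT) => _ /(_ isT).
have g0 : 0 < g by case: K1 K2 => c1 _ [c2 _]; apply: gamma_tR_prod_gt0; rewrite ?c1 ?c2.
case: (gamma_tR_prod_constraints erefl g0) => L4 _ _ _.
by apply/eqP; rewrite eqn_leq gamma_tR_prod_le_K2.
Qed.

Lemma gamma_tR_prod_eq6 : g = 6 <-> gamma6_cond e1 e2.
Proof.
split=> [eg|C].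
  case: (gamma_tR_prod_constraints eg isT) => _ _ /(_ isT) [//|[K1 K2]].
  by have := gamma_tR_prod_le_K2 nG nH K1 K2; rewrite eg.
have [n0 m0] := gamma6_cond_card_gt0 sG sH C.
case: (gamma_tR_prod_constraints erefl (gamma_tR_prod_gt0 n0 m0)) => _ L5 _ _.
have [/L5 [K1 K2]|gt5] := leqP g 5; first by case: (gamma6_cond_not_K2 sG C K1 K2).
by apply/eqP; rewrite eqn_leq gamma_tR_prod_le_gamma6.
Qed.

Lemma gamma_tR_prod_eq7 : g = 7 <-> gamma7_cond e1 e2.
Proof.
split=> [eg|C7].
  have N6 : ~ gamma6_cond e1 e2 by move/gamma_tR_prod_eq6; rewrite eg.
  have NK : ~ (isK2 e1 /\ isK2 e2) by move/gamma_tR_prod_eq4; rewrite eg.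
  case: (gamma_tR_prod_constraints eg isT) => _ _ _ /(_ isT) [[U1 U2]|T].
    split=> // [|T]; first exact: unique_universal_of_not_gamma6.
    by apply: N6; apply: Or33.
  by case: N6; apply: Or33.
case: (C7) => U1 U2 C _.
have g0 := gamma_tR_prod_gt0 (card_gt0_of_universal U1) (card_gt0_of_universal U2).
case: (gamma_tR_prod_constraints erefl g0) => _ _ L6 _.
have [/L6 [|[K1 K2]]|gt6] := leqP g 6.
- by move/(not_gamma6_of_gamma7 C7).
- by case: C => -[_ []].
- by apply/eqP; rewrite eqn_leq gamma_tR_prod_le_universal.
Qed.

Lemma gamma_tR_prod_eq8 : ~ (has_universal e1 /\ has_universal e2) ->
  gamma_t e1 = 2 -> gamma_t e2 = 2 -> ~ (triangle_centered e1 /\ triangle_centered e2) -> g = 8.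
Proof.
move=> NU t1 t2 NT.
have g0 := gamma_tR_prod_gt0 (card_gt0_of_gamma_t2 nG t1) (card_gt0_of_gamma_t2 nH t2).
case: (gamma_tR_prod_constraints erefl g0) => _ _ _ L7.
have [/L7 [/NU|/NT] //|gt7] := leqP g 7.
by apply/eqP; rewrite eqn_leq gamma_tR_prod_le_gamma_t.
Qed.

End GammaProduct.

Theorem theorem3p1 (T1 T2 : finType) (e1 : rel T1) (e2 : rel T2)
  (sG : simple_graph e1) (sH : simple_graph e2)
  (nG : no_isolated e1) (nH : no_isolated e2) :
  let g := gamma_tR (direct_prod e1 e2) in
  [/\ g \notin [:: 1; 2; 3; 5],
      g = 4 <-> (isK2 e1 /\ isK2 e2),
      g = 6 <->
        [\/ (2 <= #|universals e1| /\ 2 <= #|universals e2| /\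
             (3 <= #|T1| \/ 3 <= #|T2|)),
            (isK2 e1 /\ 3 <= #|T2| /\ has_universal e2) \/
            (isK2 e2 /\ 3 <= #|T1| /\ has_universal e1)
          | triangle_centered e1 /\ triangle_centered e2],
      g = 7 <->
        [/\ has_universal e1, has_universal e2,
            (#|universals e1| = 1 /\ ~ isK2 e2) \/
            (#|universals e2| = 1 /\ ~ isK2 e1)
          & ~ (triangle_centered e1 /\ triangle_centered e2)]
    & (~ (has_universal e1 /\ has_universal e2) ->
       gamma_t e1 = 2 -> gamma_t e2 = 2 ->
       ~ (triangle_centered e1 /\ triangle_centered e2) -> g = 8)].
Proof.
split; [ exact: gamma_tR_prod_not1235 | exact: gamma_tR_prod_eq4 | exact: gamma_tR_prod_eq6
       | exact: gamma_tR_prod_eq7 | exact: gamma_tR_prod_eq8 ].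
Qed.
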